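(* Let $\boldsymbol{\sigma}=(\sigma_n\colon\mathcal{A}_{n+1}^+\to\mathcal{A}_n^+)_{n\in\mathbb{N}}$ and $\boldsymbol{\tau}=(\tau_n\colon\mathcal{B}_{n+1}^+\to\mathcal{B}_n^+)_{n\in\mathbb{N}}$ be everywhere growing and proper directive sequences and let $\boldsymbol{\phi}=(\phi_n)_{n\in\mathbb{N}}\colon\boldsymbol{\sigma}\to\boldsymbol{\tau}$ be a letter-onto factor. Then $X_{\boldsymbol{\tau}}=\bigcup_{k\in\mathbb{Z}}T^k\phi_0(X^{(1)}_{\boldsymbol{\sigma}})$ and $X^{(n)}_{\boldsymbol{\tau}}=\bigcup_{k\in\mathbb{Z}}T^k\phi_n(X^{(n)}_{\boldsymbol{\sigma}})$ for every $n\ge1$.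
   Context: An alphabet is a finite set; $\mathcal{A}^+$ is the set of nonempty finite words. A morphism $\sigma\colon\mathcal{A}^+\to\mathcal{B}^+$ is a semigroup homomorphism, extended to $\mathcal{A}^{\mathbb{Z}}\to\mathcal{B}^{\mathbb{Z}}$ by concatenation, $\sigma(x)=\cdots\sigma(x_{-1}).\sigma(x_0)\sigma(x_1)\cdots$ with $\sigma(x_0)$ starting at coordinate $0$; $T$ is the shift. $\sigma$ is proper if there are letters $u,v$ such that every $\sigma(a)$ starts with $u$ and ends with $v$; letter-onto if every $b\in\mathcal{B}$ occurs in some $\sigma(a)$. For a directive sequence $\boldsymbol{\sigma}=(\sigma_n\colon\mathcal{A}_{n+1}^+\to\mathcal{A}_n^+)$, $\sigma_{[n,N)}=\sigma_n\circ\cdots\circ\sigma_{N-1}$, its $n$th level is $X^{(n)}_{\boldsymbol{\sigma}}=\{x\in\mathcal{A}_n^{\mathbb{Z}}:\forall\ell,\ x_{[-\ell,\ell]}$ occurs in $\sigma_{[n,N)}(a)$ for some $N>n,a\in\mathcal{A}_N\}$, and $X_{\boldsymbol{\sigma}}=X^{(0)}_{\boldsymbol{\sigma}}$. It is everywhere growing if $\min_{a\in\mathcal{A}_N}|\sigma_{[0,N)}(a)|\to\infty$; proper if each $\sigma_n$ is proper. A factor $\boldsymbol{\phi}\colon\boldsymbol{\sigma}\to\boldsymbol{\tau}$ is a sequence of morphisms $\phi_0\colon\mathcal{A}_1^+\to\mathcal{B}_0^+$, $\phi_n\colon\mathcal{A}_n^+\to\mathcal{B}_n^+$ ($n\ge1$)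 with $\phi_0=\tau_0\phi_1$ and $\phi_n\sigma_n=\tau_n\phi_{n+1}$ for $n\ge1$; it is letter-onto if each $\phi_n$ is. *)

From mathcomp Require Import all_boot all_order all_algebra.
Set Implicit Arguments. Unset Strict Implicit. Unset Printing Implicit Defensive.
Import GRing.Theory Num.Theory.

(* A morphism A^+ -> B^+ is given by its (nonempty) letter images. *)
Definition nonerasing (A B : Type) (s : A -> seq B) : Prop :=
  forall a, s a <> [::].

Definition wimg (A B : Type) (s : A -> seq B) (w : seq A) : seq B :=
  flatten (map s w).

Definition biseq (A : Type) := int -> A.

(* Position in sigma(x) where sigma(x_k) starts; pos 0 = 0. *)
Definition pos (A B : Type) (s : A -> seq B) (x : biseq A) (k : int) : int :=
  match k with
  | Posz m => Posz (\sum_(i < m) size (s (x (Posz i))))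
  | Negz m => - Posz (\sum_(i < m.+1) size (s (x (- Posz i.+1)%R)))
  end.

(* y = s(x), with s(x_0) starting at coordinate 0 (well defined for a
   nonerasing s, since the blocks s(x_k) tile Z). *)
Definition is_image (A B : Type) (s : A -> seq B) (x : biseq A) (y : biseq B) : Prop :=
  forall (k : int) (j : nat) (c : B),
    onth (s (x k)) j = Some c -> y (pos s x k + Posz j)%R = c.

(* y belongs to  \bigcup_{k in Z} T^k s(X), where (T z)_i = z_{i+1}. *)
Definition shift_union_image (A B : Type) (s : A -> seq B) (X : biseq A -> Prop)
  (y : biseq B) : Prop :=
  exists (k : int) (x : biseq A) (z : biseq B),
    X x /\ is_image s x z /\ forall i : int, y i = z (i + k)%R.

Definition directive (A : nat -> finType) := forall n, A n.+1 -> seq (A n).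

(* sub sigma n k w = sigma_{[n, n+k)} (w), for w a word over A (k+n). *)
Unset Implicit Arguments.
Fixpoint sub (A : nat -> finType) (sigma : directive A) (n k : nat)
  : seq (A (Nat.add k n)) -> seq (A n) :=
  match k return seq (A (Nat.add k n)) -> seq (A n) with
  | 0 => fun w => w
  | k'.+1 => fun w => sub A sigma n k' (wimg (sigma (Nat.add k' n)) w)
  end.
Set Implicit Arguments.
Arguments sub {A} sigma n k w.

Definition window (A : Type) (x : biseq A) (l : nat) : seq A :=
  [seq x (Posz i - Posz l)%R | i <- iota 0 (2 * l).+1].

Definition level (A : nat -> finType) (sigma : directive A) (n : nat) (x : biseq (A n)) : Prop :=
  forall l : nat, exists (k : nat) (a : A (Nat.add k.+1 n)),
    infix (window x l) (sub sigma n k.+1 [:: a]).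

Definition morphisms_nonerasing (A : nat -> finType) (sigma : directive A) : Prop :=
  forall n, nonerasing (sigma n).

Definition everywhere_growing (A : nat -> finType) (sigma : directive A) : Prop :=
  forall M : nat, exists N0 : nat, forall N : nat, N0 <= N ->
    forall a : A (Nat.add N 0), M <= size (sub sigma 0 N [:: a]).

Definition proper_morphism (A B : Type) (s : A -> seq B) : Prop :=
  exists u v : B, forall a, ohead (s a) = Some u /\ ohead (rev (s a)) = Some v.

Definition proper_directive (A : nat -> finType) (sigma : directive A) : Prop :=
  forall n, proper_morphism (sigma n).

Definition letter_onto (A B : eqType) (s : A -> seq B) : Prop :=
  forall b : B, exists a : A, b \in s a.

(* A factor phi : sigma -> tau.  phi0 : A_1 -> B_0^+, and phi m represents
   phi_{m+1} : A_{m+1} -> B_{m+1}^+. *)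
Definition is_factor (A B : nat -> finType) (sigma : directive A) (tau : directive B)
  (phi0 : A 1 -> seq (B 0)) (phi : forall m, A m.+1 -> seq (B m.+1)) : Prop :=
  nonerasing phi0 /\ (forall m, nonerasing (phi m)) /\
  (forall a : A 1, phi0 a = wimg (tau 0) (phi 0 a)) /\
  (forall m (a : A m.+2), wimg (phi m) (sigma m.+1 a) = wimg (tau m.+1) (phi m.+1 a)).

Definition letter_onto_factor (A B : nat -> finType)
  (phi0 : A 1 -> seq (B 0)) (phi : forall m, A m.+1 -> seq (B m.+1)) : Prop :=
  letter_onto phi0 /\ forall m, letter_onto (phi m).

Arguments level {A} sigma n x.

(* Both inclusions rest on the commutation [phi (sigma_[p,N) u) = tau_[n,N) (phi_N u)].
   If [y] is a shift of [phi x] with [x] in the sigma-level, every window of [y]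
   lies in [phi] of a window of [x], hence in [tau_[n,N) v] for some word [v] and
   [N] as large as we like.  Since [tau] is growing and proper, a short factor of
   [tau_[n,N) v] lies in the image of a single letter or in the image of the
   junction [v0 u0] of the common last and first letters of [tau_(N-1)], and that
   junction itself occurs in some [tau_[N-1,N') c].
   Conversely, as [phi_N] is letter-onto, every window of a point [y] of the
   tau-level lies in some [phi (sigma_[p,N) a)]; cutting [sigma_[p,N) a] at the
   letter whose image covers [y_0] gives an approximate preimage, correct on
   windows of radius about [l / K] with [K = max |phi b|], with a shift at most
   [K].  The alphabets being finite, a Koenig-type compactness argument turns
   these approximations into an exact preimage. *)

From Stdlib Require Import PeanoNat ClassicalEpsilon Classical.
From mathcomp Require Import all_boot all_order all_algebra zify.
Set Implicit Arguments. Unset Strict Implicit. Unset Printing Implicit Defensive.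
Import Order.TTheory GRing.Theory Num.Theory.

Section WordFactors.
Variable T : eqType.
Implicit Types u v w : seq T.

Lemma prefix_leq_size u v w : prefix u w -> prefix v w -> size u <= size v -> prefix u v.
Proof. by rewrite !prefixE => /eqP eu /eqP ev le; rewrite -{1}ev take_takel // eu. Qed.

Lemma suffix_leq_size u v w : suffix u w -> suffix v w -> size u <= size v -> suffix u v.
Proof. by rewrite /suffix => su sv le; apply: prefix_leq_size su sv _; rewrite !size_rev. Qed.

Lemma infix_cat_cases w u v : infix w (u ++ v) ->
  [\/ infix w u, infix w v | exists w1 w2, [/\ w = w1 ++ w2, suffix w1 u & prefix w2 v]].
Proof.
case/infixP=> p [s e].
have eu : u = take (size u) (p ++ w ++ s) by rewrite -e take_size_cat.
have ev : v = drop (size u) (p ++ w ++ s) by rewrite -e drop_size_cat.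
have [le_pw_u|lt_u_pw] := leqP (size p + size w) (size u).
  apply: Or31; apply/infixP; exists p, (take (size u - (size p + size w)) s).
  rewrite {1}eu take_cat; case: ifP => ?; first by lia.
  rewrite take_cat; case: ifP => ?; first by lia.
  by rewrite subnDA.
have [le_u_p|lt_p_u] := leqP (size u) (size p).
  apply: Or32; apply/infixP; exists (drop (size u) p), s.
  rewrite ev drop_cat; case: ifP => ? //.
  have -> : size u = size p by lia.
  by rewrite subnn drop0 drop_size.
apply: Or33; exists (take (size u - size p) w), (drop (size u - size p) w).
split; first by rewrite cat_take_drop.
  apply/suffixP; exists p; rewrite {1}eu take_cat; case: ifP => ?; first by lia.
  by rewrite take_cat; case: ifP => ? //; lia.
apply/prefixP; exists s; rewrite {1}ev drop_cat; case: ifP => ?; first by lia.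
by rewrite drop_cat; case: ifP => ? //; lia.
Qed.

Lemma infix_flatten_blocks w pu pv (bs : seq (seq T)) :
  (forall b, b \in bs -> prefix pu b /\ suffix pv b) ->
  size w <= size pu -> size w <= size pv -> infix w (flatten bs) ->
  (exists2 b, b \in bs & infix w b) \/ infix w (pv ++ pu).
Proof.
move=> hbs hu hv; elim: bs hbs => [|b bs IH] /= hbs.
  by move/eqP->; right; apply: infix0s.
have [pub svb] := hbs b (mem_head _ _).
have {}hbs b' : b' \in bs -> prefix pu b' /\ suffix pv b'.
  by move=> hb'; apply: hbs; rewrite inE hb' orbT.
case/infix_cat_cases => [wb|/(IH hbs)[[b' hb' wb']|wj]|[w1 [w2 [ew sw1 pw2]]]].
- by left; exists b; rewrite ?mem_head.
- by left; exists b'; rewrite // inE hb' orbT.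
- by right.
right; have {}sw1 : suffix w1 pv.
  by apply: suffix_leq_size sw1 svb _; move: hv; rewrite ew size_cat; lia.
have {}pw2 : prefix w2 pu.
  case: bs hbs pw2 {IH} => [|b' bs] hbs.
    by rewrite prefixs0 => /eqP ->; apply: prefix0s.
  have [pub' _] := hbs b' (mem_head _ _).
  move=> pw2; apply: prefix_leq_size pw2 (prefix_catl _ pub') _.
  by move: hu; rewrite ew size_cat; lia.
case/suffixP: sw1 => [x ->]; case/prefixP: pw2 => [y ->].
by apply/infixP; exists x, y; rewrite ew !catA.
Qed.

End WordFactors.

Lemma wimg_cat X Y (f : X -> seq Y) u v : wimg f (u ++ v) = wimg f u ++ wimg f v.
Proof. by rewrite /wimg map_cat flatten_cat. Qed.

Lemma wimg_cons X Y (f : X -> seq Y) a u : wimg f (a :: u) = f a ++ wimg f u.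
Proof. by []. Qed.

Lemma wimg1 X Y (f : X -> seq Y) a : wimg f [:: a] = f a.
Proof. by rewrite /wimg /= cats0. Qed.

Lemma wimg_letter X (u : seq X) : wimg (fun a => [:: a]) u = u.
Proof. exact: flatten_seq1. Qed.

Lemma wimg_comp X Y Z (f : Y -> seq Z) (g : X -> seq Y) u :
  wimg f (wimg g u) = wimg (fun a => wimg f (g a)) u.
Proof. by elim: u => // a u IH; rewrite !wimg_cons wimg_cat IH. Qed.

Lemma eq_wimg X Y (f g : X -> seq Y) : f =1 g -> wimg f =1 wimg g.
Proof. by move=> efg u; rewrite /wimg (eq_map efg). Qed.

Lemma size_wimg_leq X Y (f : X -> seq Y) K u :
  (forall a, size (f a) <= K) -> size (wimg f u) <= K * size u.
Proof.
move=> fK; elim: u => // a u IH.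
by rewrite wimg_cons size_cat mulnS leq_add.
Qed.

Lemma size_wimg_geq X Y (f : X -> seq Y) u : nonerasing f -> size u <= size (wimg f u).
Proof.
move=> nef; elim: u => // a u IH; rewrite wimg_cons size_cat.
by case: (f a) (nef a) => // b s _ /=; lia.
Qed.

Lemma wimg_block_index X Y (f : X -> seq Y) (u : seq X) q : q < size (wimg f u) ->
  exists c, [/\ c < size u, size (wimg f (take c u)) <= q & q < size (wimg f (take c.+1 u))].
Proof.
elim: u q => [|a u IH] q //; rewrite wimg_cons size_cat => lt_q.
have [lt_qa|le_aq] := ltnP q (size (f a)).
  by exists 0; rewrite /= take0 wimg1.
have [c [lt_c le_c lt_cS]] := IH (q - size (f a)) ltac:(lia).
by exists c.+1; rewrite /= !wimg_cons !size_cat; split; lia.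
Qed.

Lemma infix_wimg (X Y : eqType) (f : X -> seq Y) u v :
  infix u v -> infix (wimg f u) (wimg f v).
Proof.
by case/infixP=> [p [s ->]]; apply/infixP; exists (wimg f p), (wimg f s); rewrite !wimg_cat.
Qed.

Section Iteration.
Variable C : nat -> finType.
Unset Implicit Arguments.
Variable rho : directive C.

(* [down n N u] is [rho_[n,N) u] for [n <= N], and [nil] for [N < n]. *)
Fixpoint down n N : seq (C N) -> seq (C n) :=
  match N return seq (C N) -> seq (C n) with
  | 0 => fun u => if Nat.eq_dec 0 n is left e then ecast j (seq (C j)) e u else [::]
  | N'.+1 => fun u => if Nat.eq_dec N'.+1 n is left e then ecast j (seq (C j)) e u
                      else down n N' (wimg (rho N') u)
  end.
Set Implicit Arguments.

Local Arguments Nat.eq_dec : simpl never.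

Lemma down_id n u : down n n u = u.
Proof. by case: n u => [|n] u //=; case: Nat.eq_dec => // e; rewrite (eq_axiomK e). Qed.

Lemma down_S n N u : n <= N -> down n N.+1 u = down n N (wimg (rho N) u).
Proof. by move=> le_nN /=; case: Nat.eq_dec => // e; exfalso; move: le_nN; rewrite -e ltnn. Qed.

Lemma down_S1 N u : down N N.+1 u = wimg (rho N) u.
Proof. by rewrite down_S // down_id. Qed.

Lemma sub_down n k u : sub rho n k u = down n (k + n) u.
Proof.
elim: k u => [|k IH] u; first by rewrite down_id.
by rewrite [RHS](down_S _ (leq_addl k n)) -IH.
Qed.

Lemma down_cat n N u v : n <= N -> down n N (u ++ v) = down n N u ++ down n N v.
Proof.
elim: N u v => [|N IH] u v le_nN.
  by move: le_nN; rewrite leqn0 => /eqP ->; rewrite !down_id.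
have [->|ne_nN] := eqVneq n N.+1; first by rewrite !down_id.
have le_nN' : n <= N by lia.
by rewrite !down_S // wimg_cat IH.
Qed.

Lemma down_nil n N : n <= N -> down n N [::] = [::].
Proof.
elim: N => [|N IH] le_nN; first by move: le_nN; rewrite leqn0 => /eqP ->; rewrite down_id.
have [->|ne_nN] := eqVneq n N.+1; first by rewrite down_id.
by rewrite down_S; [apply: IH|]; lia.
Qed.

Lemma down_wimg n N (X : Type) (f : X -> seq (C N)) u : n <= N ->
  down n N (wimg f u) = wimg (fun a => down n N (f a)) u.
Proof.
move=> le_nN; elim: u => [|a u IH]; first exact: down_nil.
by rewrite !wimg_cons down_cat // IH.
Qed.

Lemma down_letters n N u : n <= N -> down n N u = wimg (fun a => down n N [:: a]) u.
Proof. by move=> le_nN; rewrite -{1}(wimg_letter u) down_wimg. Qed.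

Lemma down_comp n m N u : n <= m -> m <= N -> down n m (down m N u) = down n N u.
Proof.
move=> le_nm; elim: N u => [|N IH] u le_mN.
  by move: le_mN; rewrite leqn0 => /eqP e; subst m; rewrite down_id.
have [e|ne_mN] := eqVneq m N.+1; first by subst m; rewrite down_id.
have le_mN' : m <= N by lia.
by rewrite !down_S ?IH //; lia.
Qed.

Lemma down_infix n N u v : n <= N -> infix u v -> infix (down n N u) (down n N v).
Proof.
move=> le_nN /infixP[p [s ->]]; apply/infixP.
by exists (down n N p), (down n N s); rewrite !down_cat.
Qed.

End Iteration.

Arguments down {C} rho n N _.

Definition agree (T : Type) (r : nat) (g h : int -> T) := forall i, (absz i < r)%N -> g i = h i.

Lemma agree_trans (T : Type) r (f g h : int -> T) : agree r f g -> agree r g h -> agree r f h.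
Proof. by move=> fg gh i lt_i; rewrite fg ?gh. Qed.

Lemma agree_leq (T : Type) r r' (g h : int -> T) : r <= r' -> agree r' g h -> agree r g h.
Proof. by move=> le_r gh i lt_i; rewrite gh // (leq_trans lt_i). Qed.

Section Segments.
Local Open Scope ring_scope.
Variable X : Type.
Implicit Types (x : biseq X) (a : int) (m : nat).

Definition seg x a m : seq X := [seq x (a + i%:Z) | i <- iota 0 m].

Lemma size_seg x a m : size (seg x a m) = m.
Proof. by rewrite size_map size_iota. Qed.

Lemma nth_seg x a m d (i : nat) : (i < m)%N -> nth d (seg x a m) i = x (a + i%:Z).
Proof. by move=> lt_im; rewrite (nth_map 0%N) ?size_iota // nth_iota. Qed.

Lemma seg_cat x a m1 m2 : seg x a (m1 + m2) = seg x a m1 ++ seg x (a + m1%:Z) m2.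
Proof.
rewrite /seg iotaD map_cat add0n.
have -> : iota m1 m2 = map (addn m1) (iota 0 m2) by rewrite -iotaDl addn0.
by rewrite -map_comp; congr (_ ++ _); apply: eq_map => i /=; rewrite PoszD addrA.
Qed.

Lemma seg_cons x a m : seg x a m.+1 = x a :: seg x (a + 1) m.
Proof. by rewrite -add1n seg_cat /seg /= addr0. Qed.

Lemma window_seg x l : window x l = seg x (- l%:Z) (2 * l).+1.
Proof. by apply: eq_map => i; rewrite addrC. Qed.

Lemma size_window x l : size (window x l) = (2 * l).+1.
Proof. by rewrite window_seg size_seg. Qed.

Lemma nth_window x l d j : (j < (2 * l).+1)%N -> nth d (window x l) j = x (j%:Z - l%:Z).
Proof. by move=> lt_j; rewrite window_seg nth_seg // addrC. Qed.

Lemma eq_window x x' l : agree l.+1 x x' -> window x l = window x' l.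
Proof. by move=> xx'; apply/eq_in_map => i; rewrite mem_iota => /andP[_ lt_i]; apply: xx'; lia. Qed.

Lemma take_seg x a m c : (c <= m)%N -> take c (seg x a m) = seg x a c.
Proof. by move=> le_cm; rewrite -(subnKC le_cm) seg_cat take_size_cat ?size_seg. Qed.

Definition extend (d : X) (U : seq X) (c : nat) : biseq X := fun j => nth d U (absz (j + c%:Z)).

Lemma seg_extend d U c : seg (extend d U c) (- c%:Z) (size U) = U.
Proof.
apply: (@eq_from_nth _ d); rewrite size_seg // => i lt_i.
by rewrite nth_seg // /extend addrAC addNr add0r.
Qed.

End Segments.

Section SegmentInfix.
Local Open Scope ring_scope.

Lemma seg_infix (X : eqType) (x : biseq X) (a b : int) (m m' : nat) :
  b <= a -> a + m%:Z <= b + m'%:Z -> infix (seg x a m) (seg x b m').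
Proof.
move=> le_ba; have [d ->] : exists d : nat, a = b + d%:Z by exists (absz (a - b)); lia.
move=> le_end; have [e ->] : exists e : nat, m' = (d + m + e)%N by exists (m' - (d + m))%N; lia.
rewrite !seg_cat; apply/infixP; exists (seg x b d), (seg x (b + d%:Z + m%:Z) e).
by rewrite catA PoszD addrA.
Qed.

End SegmentInfix.

Section Positions.
Local Open Scope ring_scope.
Variables (X Y : Type) (s : X -> seq Y) (x : biseq X).

Lemma pos0 : pos s x 0 = 0.
Proof. by rewrite /pos /= big_ord0. Qed.

Lemma posS k : pos s x (k + 1) = pos s x k + (size (s (x k)))%:Z.
Proof.
case: k => [m|[|m]].
- have -> : Posz m + 1 = Posz m.+1 by rewrite -addn1.
  by rewrite /pos big_ord_recr /= PoszD.
- by rewrite /pos /= !big_ord_recr !big_ord0 /= addNr.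
- have -> : Negz m.+1 + 1 = Negz m by rewrite !NegzE; lia.
  rewrite /pos [in RHS]big_ord_recr /= PoszD opprD.
  have -> : - Posz m.+2 = Negz m.+1 by [].
  lia.
Qed.

Lemma pos_seg a m : pos s x (a + m%:Z) = pos s x a + (size (wimg s (seg x a m)))%:Z.
Proof.
elim: m a => [|m IH] a; first by rewrite !addr0.
rewrite seg_cons wimg_cons size_cat PoszD addrA -posS -IH.
by congr pos; rewrite -addn1 PoszD addrA addrAC.
Qed.

Lemma eq_pos (x' : biseq X) k : (forall i, `|i| <= `|k| -> x i = x' i)%N ->
  pos s x k = pos s x' k.
Proof.
case: k => m exx' /=; congr (_ _).
  by apply: eq_bigr => i _; rewrite exx' //= ltnW.
by congr Posz; apply: eq_bigr => i _; rewrite exx' //=.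
Qed.

Lemma seg_image z a m : is_image s x z ->
  seg z (pos s x a) (size (wimg s (seg x a m))) = wimg s (seg x a m).
Proof.
move=> xz; elim: m a => [|m IH] a; first by [].
rewrite seg_cons wimg_cons size_cat seg_cat -posS IH; congr (_ ++ _).
apply: (@eq_from_nth _ (z 0)); rewrite size_seg // => i lt_i.
by rewrite nth_seg //; apply: xz; rewrite onthE (nth_map (z 0)).
Qed.

Unset Implicit Arguments.
Hypothesis nes : nonerasing s.
Set Implicit Arguments.

Lemma pos_addr_geq a m : pos s x a + m%:Z <= pos s x (a + m%:Z).
Proof.
rewrite pos_seg lerD2l lez_nat.
by have := size_wimg_geq (seg x a m) nes; rewrite size_seg.
Qed.

Lemma ltr_posS k : pos s x k < pos s x (k + 1).
Proof. by rewrite posS ltrDl ltz_nat; case: (s (x k)) (nes (x k)). Qed.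

Lemma ler_pos : {homo pos s x : k k' / k <= k'}.
Proof.
move=> k k' le_kk'; have -> : k' = k + (absz (k' - k))%:Z by lia.
by apply: le_trans (pos_addr_geq _ _); rewrite lerDl.
Qed.

Lemma pos_inj k k' (j j' : nat) : (j < size (s (x k)))%N -> (j' < size (s (x k')))%N ->
  pos s x k + j%:Z = pos s x k' + j'%:Z -> k = k'.
Proof.
move=> lt_j lt_j' e; case: (ltrgtP k k') => // [lt_kk'|lt_k'k].
  by have := ler_pos (_ : k + 1 <= k'); rewrite posS; lia.
by have := ler_pos (_ : k' + 1 <= k); rewrite posS; lia.
Qed.

Lemma pos_surj i : exists k (j : nat), (j < size (s (x k)))%N /\ pos s x k + j%:Z = i.
Proof.
have le_start : pos s x (- (absz i)%:Z) <= i.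
  by have := pos_addr_geq (- (absz i)%:Z) (absz i); rewrite addNr pos0; lia.
suff /(_ _ _ le_start (leqnn _)) : forall (d : nat) b, pos s x b <= i ->
    (absz (i - pos s x b) <= d)%N ->
  exists k (j : nat), (j < size (s (x k)))%N /\ pos s x k + j%:Z = i by [].
elim=> [|d IH] b le_bi le_d.
  by exists b, 0%N; split; [case: (s (x b)) (nes (x b))|lia].
have [lt_i|le_i] := ltrP i (pos s x (b + 1)).
  by exists b, (absz (i - pos s x b)); split; [move: lt_i; rewrite posS|]; lia.
by apply: (IH (b + 1)) => //; have := ltr_posS b; lia.
Qed.

Lemma is_image_exists : exists z, is_image s x z.
Proof.
have letter i : exists c, exists k (j : nat), onth (s (x k)) j = Some c /\ pos s x k + j%:Z = i.
  have [k [j [lt_j e]]] := pos_surj i.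
  case E: (s (x k)) lt_j => [//|c0 t] lt_j.
  by exists (nth c0 (s (x k)) j), k, j; rewrite E onthE (nth_map c0).
exists (fun i => proj1_sig (constructive_indefinite_description _ (letter i))) => k j c skj.
case: constructive_indefinite_description => c' [k' [j' [sk'j' e]]] /=.
have lt_j : (j < size (s (x k)))%N by rewrite -onthTE skj.
have lt_j' : (j' < size (s (x k')))%N by rewrite -onthTE sk'j'.
have ek := pos_inj lt_j' lt_j e; subst k'.
have ej : j' = j by move: e; lia.
by subst j'; move: sk'j'; rewrite skj => -[].
Qed.

End Positions.

Section Compactness.
Variables (T : finType) (P : nat -> (int -> T) -> Prop).
Hypothesis P_ex : forall l, exists h, P l h.

Let recurrent r g := forall L, exists l, L <= l /\ exists h, P l h /\ agree r h g.

(* Pigeonhole on the values [(h r, h (-r))] of the witnesses [h]. *)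
Let recurrentS r g : recurrent r g -> exists g', recurrent r.+1 g' /\ agree r g' g.
Proof.
move=> rec_g.
pose upd (t : T * T) i := if i == Posz r then t.1 else if i == (- Posz r)%R then t.2 else g i.
have agree_upd t : agree r (upd t) g.
  by move=> i lt_i; rewrite /upd; case: eqP => [ei|_]; [lia|case: eqP => [ei|//]; lia].
apply: NNPP => no_ext.
have bound t : exists L, forall l, L <= l -> ~ exists h, P l h /\ agree r.+1 h (upd t).
  apply: NNPP => not_bound; apply: no_ext; exists (upd t); split=> // L.
  by apply: NNPP => no_l; apply: not_bound; exists L => l le_l hl; apply: no_l; exists l.
pose Lt t := proj1_sig (constructive_indefinite_description _ (bound t)).
have [l [le_l [h [Plh agree_h]]]] := rec_g (\max_t Lt t).
pose t := (h (Posz r), h (- Posz r)%R).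
apply: (proj2_sig (constructive_indefinite_description _ (bound t)) l).
  exact: leq_trans (leq_bigmax t) le_l.
exists h; split=> // i lt_i; rewrite /upd.
case: eqP => [->//|ne_r]; case: eqP => [->//|ne_mr].
by apply: agree_h; move: ne_r ne_mr; lia.
Qed.

Lemma compactness : exists g, forall r, recurrent r g.
Proof.
have [g0 _] := P_ex 0.
pose next r g := epsilon (inhabits g0) (fun g' => recurrent r.+1 g' /\ agree r g' g).
pose G := fix G r := if r is r'.+1 then next r' (G r') else g0.
have rec_G r : recurrent r (G r).
  elim: r => [|r IH] L; last by have [] := epsilon_spec (inhabits g0) _ (recurrentS IH).
  by have [h Ph] := P_ex L; exists L; split=> //; exists h.
have agree_G r n : agree r (G (n + r)) (G r).
  elim: n => [//|n IH]; apply: agree_trans IH; apply: agree_leq (leq_addl n r) _.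
  by have [] := epsilon_spec (inhabits g0) _ (recurrentS (rec_G (n + r))).
exists (fun i => G (absz i).+1 i) => r L.
have [l [le_l [h [Ph agree_h]]]] := rec_G r L.
exists l; split=> //; exists h; split=> //; apply: agree_trans agree_h _ => i lt_i.
by have /(_ i (ltnSn _)) := agree_G (absz i).+1 (r - (absz i).+1); rewrite subnK.
Qed.

End Compactness.

Definition language (C : nat -> finType) (rho : directive C) m (w : seq (C m)) : Prop :=
  exists N (a : C N), m < N /\ infix w (down rho m N [:: a]).
Arguments language {C} rho m w.

Lemma ohead_cons (T : Type) (s : seq T) u : ohead s = Some u -> exists r, s = u :: r.
Proof. by case: s => //= a r [->]; exists r. Qed.

Lemma ohead_rev_rcons (T : Type) (s : seq T) v : ohead (rev s) = Some v -> exists r, s = rcons r v.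
Proof. by case/lastP: s => [|r a] //; rewrite rev_rcons => -[->]; exists r. Qed.

Section Language.
Variable C : nat -> finType.
Unset Implicit Arguments.
Variable rho : directive C.
Set Implicit Arguments.

Lemma level_language m x : level rho m x <-> forall l, language rho m (window x l).
Proof.
split=> lev l.
  have [k [a occ]] := lev l; exists (k.+1 + m)%N, a.
  by rewrite -sub_down; split=> //; rewrite addSn ltnS leq_addl.
have [N [a [lt_mN occ]]] := lev l.
have [k eN] : exists k, N = (k.+1 + m)%N by exists (N - m.+1); lia.
by subst N; exists k, a; rewrite sub_down.
Qed.

Lemma level_deep_occurrence m x : level rho m x -> forall l K, exists N (a : C N),
  [/\ K <= N, m < N & infix (window x l) (down rho m N [:: a])].
Proof.
move=> /level_language lev l K.
pose Bd := \max_(N < K) \max_(a : C N) size (down rho m N [:: a]).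
have [N [a [lt_mN occ]]] := lev (maxn l Bd).
exists N, a; split=> //; last first.
  by apply: infix_trans occ; rewrite !window_seg; apply: seg_infix; lia.
rewrite leqNgt; apply/negP => lt_NK.
have le_Bd : size (down rho m N [:: a]) <= Bd.
  by apply: leq_trans (leq_bigmax (Ordinal lt_NK)); apply: (leq_bigmax a).
have := size_infix occ; rewrite size_map size_iota ltnNge (leq_trans le_Bd) //.
by rewrite (leq_trans (leq_maxr l Bd)) // leq_pmull.
Qed.

Hypothesis rho_growing : everywhere_growing rho.

Lemma everywhere_growing_down0 M : exists K, forall N, K <= N -> forall b : C N,
  M <= size (down rho 0 N [:: b]).
Proof.
have [K growK] := rho_growing M; exists K => N le_KN.
have growN : forall b : C (N + 0)%coq_nat, M <= size (down rho 0 (N + 0) [:: b]).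
  by move=> b; rewrite -sub_down; apply: growK.
by rewrite -[(N + 0)%coq_nat]/(N + 0)%N addn0 in growN.
Qed.

Lemma everywhere_growing_down m M : exists K, forall N, K <= N -> forall b : C N,
  M <= size (down rho m N [:: b]).
Proof.
pose Cm := (\max_(c : C m) size (down rho 0 m [:: c])).+1.
have [K0 growK0] := everywhere_growing_down0 (M * Cm).
exists (maxn K0 m) => N le_N b.
have le_mN : m <= N by apply: leq_trans (leq_maxr _ _) le_N.
have := growK0 N (leq_trans (leq_maxl _ _) le_N) b.
have le_Cm c : size (down rho 0 m [:: c]) <= Cm by rewrite ltnW // ltnS (leq_bigmax c).
rewrite -(@down_comp _ rho 0 m N) // down_letters // => /leq_trans/(_ (size_wimg_leq _ le_Cm)).
by rewrite mulnC leq_pmul2l.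
Qed.

Hypothesis rho_proper : proper_directive rho.

Lemma junction_language N (u v : C N) :
  (forall a, ohead (rho N a) = Some u /\ ohead (rev (rho N a)) = Some v) ->
  language rho N [:: v; u].
Proof.
move=> uv_proper; have [K growK] := everywhere_growing_down N.+1 2.
pose N' := maxn K N.+1.
have [c _] : exists c : C N', True by have [c _] := rho_proper N'; exists c.
exists N', c; split; first by rewrite leq_max ltnSn orbT.
rewrite -(@down_comp _ rho N N.+1 N') ?leq_maxr // down_S1.
have := growK N' (leq_maxl _ _) c.
case: (down rho N.+1 N' [:: c]) => [|b1 [|b2 bs]] //= _; rewrite !wimg_cons.
have [r1 ->] := ohead_rev_rcons (proj2 (uv_proper b1)).
have [r2 ->] := ohead_cons (proj1 (uv_proper b2)).
by apply/infixP; exists r1, (r2 ++ wimg (rho N) bs); rewrite -cats1 -!catA.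
Qed.

Lemma short_infix_language n M : exists K, forall N, K <= N -> forall (v : seq (C N)) w,
  size w <= M -> infix w (down rho n N v) -> language rho n w.
Proof.
have [K growK] := everywhere_growing_down n M.
exists (maxn K n).+1 => [[|N]] // /ltnSE le_N v w le_wM occ.
have le_nN : n <= N by apply: leq_trans (leq_maxr _ _) le_N.
have le_KN : K <= N by apply: leq_trans (leq_maxl _ _) le_N.
have [u0 [v0 uv_proper]] := rho_proper N.
rewrite down_S // down_wimg // in occ.
pose pu := down rho n N [:: u0]; pose pv := down rho n N [:: v0].
have blocks b : b \in map (fun a => down rho n N (rho N a)) v -> prefix pu b /\ suffix pv b.
  case/mapP => a _ ->; split.
    by have [r ->] := ohead_cons (proj1 (uv_proper a)); rewrite -cat1s down_cat ?prefix_prefix.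
  by have [r ->] := ohead_rev_rcons (proj2 (uv_proper a)); rewrite -cats1 down_cat ?suffix_suffix.
have le_wu : size w <= size pu by apply: leq_trans le_wM (growK N le_KN u0).
have le_wv : size w <= size pv by apply: leq_trans le_wM (growK N le_KN v0).
case: (infix_flatten_blocks blocks le_wu le_wv occ) => [[_ /mapP[a _ ->] occ_a]|occ_j].
  by exists N.+1, a; rewrite down_S // wimg1 ltnS.
have [N' [c [lt_NN' occ_vu]]] := junction_language uv_proper.
exists N', c; split; first exact: leq_ltn_trans le_nN lt_NN'.
rewrite -(@down_comp _ rho n N N') ?(ltnW lt_NN') //; apply: infix_trans occ_j _.
by rewrite -down_cat //; apply: down_infix.
Qed.

End Language.

Section Preimages.
Local Open Scope ring_scope.
Variables (X Y : eqType) (psi : X -> seq Y).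
Unset Implicit Arguments.
Hypothesis psi_nonerasing : nonerasing psi.
Set Implicit Arguments.

Lemma is_image_closed x z :
  (forall R, exists x' z', [/\ is_image psi x' z', agree R x x' & agree R z z']) ->
  is_image psi x z.
Proof.
move=> approx k j c xkj; pose R := (maxn (absz k) (absz (pos psi x k + j%:Z))).+1.
have [x' [z' [x'z' xx' zz']]] := approx R.
have epos : pos psi x k = pos psi x' k by apply: eq_pos => i le_i; apply: xx'; lia.
have lt_R : (absz (pos psi x' k + j%:Z)%R < R)%N by rewrite -epos; lia.
by rewrite epos zz' //; apply: x'z'; rewrite -xx' //; lia.
Qed.

Variable K : nat.
Hypothesis psi_bounded : forall a, (size (psi a) <= K)%N.

Lemma local_preimage (y : biseq Y) (U : seq X) l : infix (window y l) (wimg psi U) ->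
  exists x z (k : 'I_K.+1), [/\ is_image psi x z,
    forall i, (absz i <= l)%N -> y i = z (i + k%:Z) &
    forall r, (K * r.+1 <= l)%N -> infix (window x r) U].
Proof.
move=> occ; have [d _] : exists d : X, True.
  by case: U occ => [|a U] occ; [have := size_infix occ; rewrite size_window | exists a].
case/infixP: occ => pre [suf eU].
have size_U : size (wimg psi U) = (size pre + (2 * l).+1 + size suf)%N.
  by rewrite eU !size_cat size_window addnA.
pose q := (size pre + l)%N.
have [c [lt_c le_s1 lt_s2]] := @wimg_block_index _ _ psi U q ltac:(lia).
pose s1 := size (wimg psi (take c U)).
have lt_k : (q - s1 < K.+1)%N.
  move: lt_s2; rewrite (take_nth d lt_c) -cats1 wimg_cat wimg1 size_cat.
  by have := psi_bounded (nth d U c); lia.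
pose x := extend d U c.
have [z xz] := is_image_exists x psi_nonerasing.
exists x, z, (Ordinal lt_k); split=> //.
- have seg_c : seg x (- c%:Z) c = take c U by rewrite -(take_seg _ _ (ltnW lt_c)) seg_extend.
  have pos_c : pos psi x (- c%:Z) = - s1%:Z.
    by have := pos_seg psi x (- c%:Z) c; rewrite addNr pos0 seg_c -/s1; lia.
  have zU := seg_image (- c%:Z) (size U) xz; rewrite seg_extend pos_c in zU.
  move=> i le_i /=; pose t := absz (q%:Z + i).
  have lt_t : (t < size (wimg psi U))%N by lia.
  have -> : i + (q - s1)%N%:Z = - s1%:Z + t%:Z by lia.
  rewrite -(nth_seg _ _ (z 0) lt_t) zU eU nth_cat ifN -?leqNgt; last by lia.
  by rewrite nth_cat size_window ifT ?nth_window; [congr y | |]; lia.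
- move=> r le_rl; rewrite window_seg -(seg_extend d U c); apply: seg_infix.
    have : (K * r.+1 < K * c.+1)%N.
      by have := size_wimg_leq (take c.+1 U) psi_bounded; rewrite size_takel //; lia.
    by rewrite ltn_mul2l => /andP[_]; lia.
  have : (K * r.+1 < K * (size U - c))%N.
    have := size_wimg_leq (drop c U) psi_bounded; rewrite size_drop.
    have : size (wimg psi U) = (s1 + size (wimg psi (drop c U)))%N.
      by rewrite -size_cat -wimg_cat cat_take_drop.
    lia.
  by rewrite ltn_mul2l => /andP[_]; lia.
Qed.

End Preimages.

Section Factor.
Variables A B : nat -> finType.
Unset Implicit Arguments.
Variables (sigma : directive A) (tau : directive B) (n p : nat).
Variables (psi : A p -> seq (B n)) (Phi : forall N, A N -> seq (B N)).
Hypothesis psi_nonerasing : nonerasing psi.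
Hypothesis Phi_onto : forall N, p <= N -> letter_onto (Phi N).
Hypothesis psi_commute : forall N (u : seq (A N)), p <= N ->
  wimg psi (down sigma p N u) = down tau n N (wimg (Phi N) u).
Hypothesis tau_growing : everywhere_growing tau.
Hypothesis tau_proper : proper_directive tau.
Set Implicit Arguments.

Lemma level_of_shift_image y : shift_union_image psi (level sigma p) y -> level tau n y.
Proof.
case=> k [x [z [lev_x [xz yz]]]]; apply/level_language => l.
have [K0 short] := short_infix_language tau_growing tau_proper n (2 * l).+1.
pose L := (absz k + l)%N.
have [N [a [le_N lt_pN occ]]] := level_deep_occurrence lev_x L (maxn K0 p).
apply: (short N (leq_trans (leq_maxl _ _) le_N) (wimg (Phi N) [:: a])).
  by rewrite size_window.
rewrite -psi_commute; last exact: leq_trans (leq_maxr _ _) le_N.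
apply: infix_trans (infix_wimg psi occ).
have -> : window y l = seg z (- l%:Z + k)%R (2 * l).+1.
  by rewrite window_seg; apply: eq_map => i; rewrite yz addrAC.
rewrite window_seg -(seg_image _ _ xz); apply: seg_infix.
  by have := pos_addr_geq x psi_nonerasing (- L%:Z)%R L; rewrite addNr pos0; lia.
rewrite -pos_seg; have := pos_addr_geq x psi_nonerasing 0%R L.+1; rewrite pos0 add0r.
have -> : (- L%:Z + (2 * L).+1%:Z = L.+1%:Z)%R by lia.
lia.
Qed.

Lemma level_window_in_image y l : level tau n y ->
  exists U, infix (window y l) (wimg psi U) /\ forall w, infix w U -> language sigma p w.
Proof.
move=> lev_y; have [N [b [lt_pN lt_nN occ]]] := level_deep_occurrence lev_y l p.+1.
have [a b_in] := Phi_onto N (ltnW lt_pN) b.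
exists (down sigma p N [:: a]); split; last by move=> w occ_w; exists N, a.
rewrite psi_commute ?(ltnW lt_pN) // wimg1; apply: infix_trans occ _.
by apply: down_infix; rewrite ?infix1s // ltnW.
Qed.

(* The shift [k] is stored as a constant coordinate so that the compactness
   argument also stabilises it. *)
Lemma shift_image_of_level y : level tau n y -> shift_union_image psi (level sigma p) y.
Proof.
move=> lev_y; pose K := \max_(a : A p) size (psi a).
have psi_bounded a : size (psi a) <= K by apply: (leq_bigmax a).
pose P l (h : int -> A p * B n * 'I_K.+1) := exists x z (k : 'I_K.+1),
  [/\ h =1 (fun i => (x i, z i, k)), is_image psi x z,
      forall i, absz i <= l -> y i = z (i + k%:Z)%R &
      forall r, K * r.+1 <= l -> language sigma p (window x r)].
have P_ex l : exists h, P l h.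
  have [U [occ lang]] := level_window_in_image l lev_y.
  have [x [z [k [xz yz wx]]]] := local_preimage psi_nonerasing psi_bounded occ.
  by exists (fun i => (x i, z i, k)), x, z, k; split=> // r /wx; apply: lang.
have [g g_lim] := compactness P_ex.
exists (g 0%R).2, (fun i => (g i).1.1), (fun i => (g i).1.2); split; [|split].
- apply/level_language => r.
  have [l [le_l [h [[x [z [k [eh _ _ lang]]]] hg]]]] := g_lim r.+1 (K * r.+1).
  by rewrite (@eq_window _ _ x) => [|i lt_i]; [apply: lang | rewrite -hg ?eh].
- apply: is_image_closed => R.
  have [l [_ [h [[x [z [k [eh xz _ _]]]] hg]]]] := g_lim R 0.
  by exists x, z; split=> // i lt_i /=; rewrite -hg ?eh.
- move=> i; have [l [le_l [h [[x [z [k [eh _ yz _]]]] hg]]]] :=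
    g_lim (absz (i + (g 0%R).2%:Z)%R).+1 (absz i).
  have ek : k = (g 0%R).2 by rewrite -hg ?eh.
  by have := hg _ (ltnSn _); rewrite eh -ek => <-; apply: yz.
Qed.

End Factor.

(* [phi_N] for [N >= 1]; the value at level [0] is never used. *)
Definition factor_at (A B : nat -> finType) (phi : forall m, A m.+1 -> seq (B m.+1)) N :
  A N -> seq (B N) := if N is m.+1 then phi m else fun _ => [::].
Arguments factor_at {A B} phi N _.

Lemma factor_commute (A B : nat -> finType) (sigma : directive A) (tau : directive B)
    (phi : forall m, A m.+1 -> seq (B m.+1)) :
  (forall m (a : A m.+2), wimg (phi m) (sigma m.+1 a) = wimg (tau m.+1) (phi m.+1 a)) ->
  forall m N (u : seq (A N)), m < N ->
  wimg (phi m) (down sigma m.+1 N u) = down tau m.+1 N (wimg (factor_at phi N) u).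
Proof.
move=> phi_commute m; elim=> [//|N IH] u lt_mN.
have [e|ne_mN] := eqVneq m N; first by subst m; rewrite !down_id.
have lt_mN' : m < N by rewrite ltn_neqAle ne_mN -ltnS.
rewrite !down_S // IH // !wimg_comp; congr down; apply: eq_wimg => a.
by case: N a {IH lt_mN ne_mN u} lt_mN' => [|N] a // _; apply: phi_commute.
Qed.

Theorem lemma4p3 (A B : nat -> finType) (sigma : directive A) (tau : directive B)
  (phi0 : A 1 -> seq (B 0)) (phi : forall m, A m.+1 -> seq (B m.+1)) :
  morphisms_nonerasing sigma -> morphisms_nonerasing tau ->
  everywhere_growing sigma -> proper_directive sigma ->
  everywhere_growing tau -> proper_directive tau ->
  is_factor sigma tau phi0 phi -> letter_onto_factor phi0 phi ->
  (forall y : biseq (B 0),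
     level tau 0 y <-> shift_union_image phi0 (level sigma 1) y) /\
  (forall (m : nat) (y : biseq (B m.+1)),
     level tau m.+1 y <-> shift_union_image (phi m) (level sigma m.+1) y).
Proof.
(* Only [tau] has to be growing and proper. *)
move=> _ _ _ _ tau_growing tau_proper [phi0_ne [phi_ne [phi0_tau phi_commute]]] [_ phi_onto].
have onto q N : q < N -> letter_onto (factor_at phi N) by case: N => // N _; apply: phi_onto.
have commute := factor_commute phi_commute.
have commute0 N (u : seq (A N)) : 0 < N ->
    wimg phi0 (down sigma 1 N u) = down tau 0 N (wimg (factor_at phi N) u).
  move=> lt_0N; rewrite (eq_wimg phi0_tau) -wimg_comp commute //.
  by rewrite -down_S1 down_comp.
split=> [y|m y]; split.
- exact: (shift_image_of_level phi0_ne (onto 0) commute0).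
- exact: (level_of_shift_image phi0_ne commute0 tau_growing tau_proper).
- exact: (shift_image_of_level (phi_ne m) (onto m) (commute m)).
- exact: (level_of_shift_image (phi_ne m) (commute m) tau_growing tau_proper).
Qed.
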